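(* Let $n,r\in\mathbb{N}$, $k\in\mathbb{N}\cup\{0\}$, and let $U\in\mathbb{C}^{2^{n+r+k}\times 2^{n+r+k}}$ be unitary. Let $\mathcal{C}_{(U,k)}$ be the linear map on $(n+r)$-qubit operators given by $\mathcal{C}_{(U,k)}(\rho)=U(\rho\otimes|0^k\rangle\langle 0^k|)U^\dagger$, regarded as a map $\mathcal{L}(\mathcal{H}_{A_I}\otimes\mathcal{H}_P)\to\mathcal{L}(\mathcal{H}_{A_O}\otimes\mathcal{H}_F)$ with $\mathcal{H}_{A_I}=\mathcal{H}_{A_O}=\mathcal{S}(n)$ (the first $n$ qubits), $\mathcal{H}_P=\mathcal{S}(r)$, $\mathcal{H}_F=\mathcal{S}(r+k)$. Let $W=\mathbf{CJ}(\mathcal{C}_{(U,k)})$ and let $U_G=\mathrm{tr}_{\mathcal{H}_{A_I}}(U)\in\mathbb{C}^{2^{r+k}\times2^{r+k}}$ (the partial trace of the matrix $U$ over its first $n$ qubits). Define the linear map $\mathcal{C}_{(U_G,k)}:\mathcal{L}(\mathcal{S}(r))\to\mathcal{L}(\mathcal{S}(r+k))$ by $\mathcal{C}_{(U_G,k)}(\sigma)=U_G(\sigma\otimes|0^k\rangle\langle0^k|)U_G^\dagger$. Then $$G_{W,A_I,A_O}=\mathbf{CJ}(\mathcal{C}_{(U_G,k)}).$$ In particular, if $\mathcal{C}_{(U_G,k)}$ is CPTP, then $W$ is a process matrix with respect to $\mathcal{H}_{A_I},\mathcal{H}_{A_O}$, and for every quantum circuit $C$ implementing the channel $\mathcal{C}_{(U,k)}$,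 the pair $(n,C)$ is a PMG with $\mathbf{PMO}_{(n,C)}=\mathcal{C}_{(U_G,k)}$.
   Context: $\mathcal{S}(n)=\mathbb{C}^{2^n}$ with computational basis $\{|x\rangle:x\in\{0,1\}^n\}$. Partial trace: for an operator $M$ on $\mathcal{H}_0\otimes\mathcal{H}_1$ with $\mathcal{H}_0=\mathcal{S}(n)$ (not necessarily a density operator), $\mathrm{tr}_{\mathcal{H}_0}(M)=\sum_{x\in\{0,1\}^n}(\langle x|\otimes I)M(|x\rangle\otimes I)$. Choi–Jamiołkowski (CJ): for a linear map $\mathcal{C}:\mathcal{L}(\mathcal{S}(a))\to\mathcal{L}(\mathcal{S}(b))$, $\mathbf{CJ}(\mathcal{C})=\sum_{x,y\in\{0,1\}^a}|x\rangle\langle y|\otimes\mathcal{C}(|x\rangle\langle y|)$. For $M\in\mathcal{L}(\mathcal{H}_0\otimes\mathcal{H}_1)$, $\mathbf{CJ}^{-1}(M,\mathcal{H}_0,\mathcal{H}_1)$ is the unique linear map $\mathcal{L}(\mathcal{H}_0)\to\mathcal{L}(\mathcal{H}_1)$ whose CJ operator is $M$ (explicitly $X\mapsto\mathrm{tr}_{\mathcal{H}_0}((X^{T}\otimes I)M)$). Indefinite operator: for $W$ an operator on $\mathcal{H}_{A_I}\otimes\mathcal{H}_P\otimes\mathcal{H}_{A_O}\otimes\mathcal{H}_F$ with $\mathcal{H}_{A_I}=\mathcal{H}_{A_O}=\mathcal{S}(n)$, let $K=\sum_{x\in\{0,1\}^n}|x\rangle_{A_I}\otimes I_P\otimes|x\rangle_{A_O}\otimes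 I_F$ and $G_{W,A_I,A_O}=\mathrm{tr}_{A_I,A_O}(W K K^\dagger)$, an operator on $\mathcal{H}_P\otimes\mathcal{H}_F$. Define $\mathbf{PMO}(W,\mathcal{H}_{A_I},\mathcal{H}_{A_O})=\mathbf{CJ}^{-1}(G_{W,A_I,A_O},\mathcal{H}_P,\mathcal{H}_F)$; $W$ is a process matrix with respect to $\mathcal{H}_{A_I},\mathcal{H}_{A_O}$ if this map is completely positive and trace-preserving (CPTP). Quantum circuits: an $a$-to-$b$ quantum circuit is built from gates of a fixed constant-size set of single-qubit gates, CNOT, SWAP, Toffoli, measurements and $|0\rangle$ ancillas, mapping $a$-qubit mixed states to $b$-qubit mixed states; $\mathcal{C}_C$ denotes the channel it implements. Process matrix generator (PMG): for $n\ge1$, $r,\ell\ge0$ and an $(n+r)$-to-$(n+\ell)$ circuit $C$, regard $\mathcal{C}_C$ as a map $\mathcal{L}(\mathcal{H}_{A_I}\otimes\mathcal{H}_P)\to\mathcal{L}(\mathcal{H}_{A_O}\otimes\mathcal{H}_F)$ with $\mathcal{H}_{A_I}=\mathcal{H}_{A_O}=\mathcal{S}(n)$ (first $n$ qubits), $\mathcal{H}_P=\mathcal{S}(r)$, $\mathcal{H}_F=\mathcal{S}(\ell)$; set $\mathbf{PMO}_{(n,C)}=\mathbf{PMO}(\mathbf{CJ}(\mathcal{C}_C),\mathcal{H}_{A_I},\mathcal{H}_{A_O})$; $(n,C)$ is a PMG if $\mathbf{PMO}_{(n,C)}$ is CPTP. *)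

From HB Require Import structures.
From mathcomp Require Import all_boot all_order all_algebra.
From mathcomp Require Import mxtens.
From mathcomp Require Export spectral.
Set Implicit Arguments.
Unset Strict Implicit.
Unset Printing Implicit Defensive.
Import Order.TTheory GRing.Theory Num.Theory Num.Def.
Local Open Scope ring_scope.

Section Quantum.
Variable C : numClosedFieldType.

Definition adj m p (M : 'M[C]_(m, p)) : 'M[C]_(p, m) := map_mx conjC M^T.

Definition ket a (x : 'I_a) : 'cV[C]_a := delta_mx x 0.

Definition ketI a b (x : 'I_a) : 'M[C]_(a * b, b) :=
  castmx (erefl, mul1n b) (tensmx (ket x) (1%:M : 'M[C]_b)).

Definition ptrace1 a b (M : 'M[C]_(a * b)) : 'M[C]_b :=
  \sum_(x < a) adj (ketI b x) *m M *m ketI b x.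

Definition CJ a b (Phi : 'M[C]_a -> 'M[C]_b) : 'M[C]_(a * b) :=
  \sum_(x < a) \sum_(y < a) tensmx (delta_mx x y : 'M[C]_a) (Phi (delta_mx x y)).

Definition CJinv a b (M : 'M[C]_(a * b)) : 'M[C]_a -> 'M[C]_b :=
  fun X => ptrace1 (tensmx X^T (1%:M : 'M[C]_b) *m M).

(* The operator (|x>_{A_I} (x) I_P (x) |y>_{A_O} (x) I_F) on
   H_{A_I} (x) H_P (x) H_{A_O} (x) H_F, with dI = dim A_I = dim A_O. *)
Definition ket4 dI dP dF (x y : 'I_dI) : 'M[C]_((dI * dP) * (dI * dF), dP * dF) :=
  castmx (erefl, f_equal2 muln (mul1n dP) (mul1n dF))
    (tensmx (tensmx (ket x) (1%:M : 'M[C]_dP)) (tensmx (ket y) (1%:M : 'M[C]_dF))).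

Definition Kop dI dP dF : 'M[C]_((dI * dP) * (dI * dF), dP * dF) :=
  \sum_(x < dI) ket4 dP dF x x.

Definition ptrace_AIAO dI dP dF (M : 'M[C]_((dI * dP) * (dI * dF))) : 'M[C]_(dP * dF) :=
  \sum_(x < dI) \sum_(y < dI) adj (ket4 dP dF x y) *m M *m ket4 dP dF x y.

Definition Gop dI dP dF (W : 'M[C]_((dI * dP) * (dI * dF))) : 'M[C]_(dP * dF) :=
  ptrace_AIAO (W *m Kop dI dP dF *m adj (Kop dI dP dF)).

Definition PMO dI dP dF (W : 'M[C]_((dI * dP) * (dI * dF))) : 'M[C]_dP -> 'M[C]_dF :=
  CJinv (Gop W).

Definition psd m (M : 'M[C]_m) : Prop :=
  adj M = M /\ forall v : 'cV[C]_m, 0 <= (adj v *m M *m v) 0 0.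

Definition blk k a (i j : 'I_k) (X : 'M[C]_(k * a)) : 'M[C]_a :=
  adj (ketI a i) *m X *m ketI a j.

Definition ampl k a b (Phi : 'M[C]_a -> 'M[C]_b) (X : 'M[C]_(k * a)) : 'M[C]_(k * b) :=
  \sum_(i < k) \sum_(j < k) tensmx (delta_mx i j : 'M[C]_k) (Phi (blk i j X)).

Definition is_linear_map a b (Phi : 'M[C]_a -> 'M[C]_b) : Prop :=
  forall (c : C) (X Y : 'M[C]_a), Phi (c *: X + Y) = c *: Phi X + Phi Y.

Definition completely_positive a b (Phi : 'M[C]_a -> 'M[C]_b) : Prop :=
  forall (k : nat) (X : 'M[C]_(k * a)), psd X -> psd (ampl Phi X).

Definition trace_preserving a b (Phi : 'M[C]_a -> 'M[C]_b) : Prop :=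
  forall X : 'M[C]_a, \tr (Phi X) = \tr X.

Definition CPTP a b (Phi : 'M[C]_a -> 'M[C]_b) : Prop :=
  [/\ is_linear_map Phi, completely_positive Phi & trace_preserving Phi].

Definition is_process_matrix dI dP dF (W : 'M[C]_((dI * dP) * (dI * dF))) : Prop :=
  CPTP (PMO W).

Lemma pow2_gt0 k : (0 < 2 ^ k)%N.
Proof. by rewrite expn_gt0. Qed.
Definition zero_idx k : 'I_(2 ^ k) := Ordinal (pow2_gt0 k).
Definition proj0 k : 'M[C]_(2 ^ k) := delta_mx (zero_idx k) (zero_idx k).

(* C_{(U,k)}(rho) = U (rho (x) |0^k><0^k|) U^dagger, rho on A_I (x) P
   (n+r qubits), output regarded on A_O (x) F with F = S(r+k). *)
Definition chanU n r k (U : 'M[C]_(2 ^ n * 2 ^ r * 2 ^ k))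
    (rho : 'M[C]_(2 ^ n * 2 ^ r)) : 'M[C]_(2 ^ n * (2 ^ r * 2 ^ k)) :=
  castmx (esym (mulnA _ _ _), esym (mulnA _ _ _))
    (U *m tensmx rho (proj0 k) *m adj U).

Definition UG n r k (U : 'M[C]_(2 ^ n * 2 ^ r * 2 ^ k)) : 'M[C]_(2 ^ r * 2 ^ k) :=
  ptrace1 (castmx (esym (mulnA _ _ _), esym (mulnA _ _ _)) U).

Definition chanUG n r k (U : 'M[C]_(2 ^ n * 2 ^ r * 2 ^ k))
    (sigma : 'M[C]_(2 ^ r)) : 'M[C]_(2 ^ r * 2 ^ k) :=
  UG U *m tensmx sigma (proj0 k) *m adj (UG U).

End Quantum.

(* Proof: compare entries.  Every ket-like operator in the definitions is a
   0/1 matrix selecting coordinates, so all partial traces and contractions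
   just read off entries.  The CJ entry of C_(U,k) at ((x,p,y,f),(x',p',y',f'))
   is U_((y,f),(x,p,0)) conj U_((y',f'),(x',p',0)); contracting with K K^dagger
   forces y = x, y' = x' and sums over x, x', which is exactly the product
   (U_G)_(f,(p,0)) conj (U_G)_(f',(p',0)) of traces over A_I, i.e. the CJ entry
   of C_(U_G,k).  The remaining claims follow because CJ^-1 inverts CJ on
   linear maps. *)

From HB Require Import structures.
From mathcomp Require Import all_boot all_order all_algebra.
From mathcomp Require Import mxtens spectral.
From Stdlib Require Import FunctionalExtensionality.
Import GRing.Theory Num.Theory.
Local Open Scope ring_scope.
Set Implicit Arguments.
Unset Strict Implicit.

Section Entries.
Variable C : numClosedFieldType.
Notation idx := mxtens_index.

Lemma sum_mul_deltar m (F : 'I_m -> C) l0 : \sum_(l < m) F l * (l == l0)%:R = F l0.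
Proof.
by rewrite (bigD1 l0) //= eqxx mulr1 big1 ?addr0 // => l /negbTE ->; rewrite mulr0.
Qed.

Lemma sum_mul_deltal m (F : 'I_m -> C) l0 : \sum_(l < m) (l == l0)%:R * F l = F l0.
Proof. by rewrite -[RHS](sum_mul_deltar F l0); apply: eq_bigr => l _; rewrite mulrC. Qed.

Lemma big_mxtens_index a b (F : 'I_(a * b) -> C) :
  \sum_(l < a * b) F l = \sum_(x < a) \sum_(i < b) F (idx (x, i)).
Proof.
rewrite pair_big /= (reindex (@mxtens_index a b)) /=; last first.
  by exists (@mxtens_unindex a b) => ? _; rewrite (mxtens_indexK, mxtens_unindexK).
by apply: eq_bigr => -[].
Qed.

Lemma mxtens_index_eq a b (x x' : 'I_a) (y y' : 'I_b) :
  (idx (x, y) == idx (x', y')) = (x == x') && (y == y').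
Proof. by rewrite (inj_eq (can_inj (@mxtens_indexK a b))) xpair_eqE. Qed.

Lemma cast_mxtens_index a b c (e : (a * (b * c) = a * b * c)%N)
    (x : 'I_a) (p : 'I_b) (q : 'I_c) :
  cast_ord e (idx (x, idx (p, q))) = idx (idx (x, p), q).
Proof. by apply: val_inj => /=; rewrite mulnDl -mulnA addnA. Qed.

Lemma adjE m p (M : 'M[C]_(m, p)) i j : adj M i j = (M j i)^*.
Proof. by rewrite /adj !mxE. Qed.

Lemma tensmx_delta m n p q (i : 'I_m) (j : 'I_n) (k : 'I_p) (l : 'I_q) :
  delta_mx i j *t delta_mx k l = delta_mx (idx (i, k)) (idx (j, l)) :> 'M[C]_(_, _).
Proof.
apply/matrixP => s t; case: (mxtens_indexP s) => s1 s2; case: (mxtens_indexP t) => t1 t2.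
by rewrite tensmxE !mxE !mxtens_index_eq -natrM mulnb andbACA.
Qed.

Lemma mulmx_delta_adjE m p q (M' : 'M[C]_(p, m)) (M : 'M[C]_(q, m)) s t a b :
  (M' *m delta_mx s t *m adj M) a b = M' a s * (M b t)^*.
Proof.
rewrite mxE -[RHS](sum_mul_deltal (fun c => M' a s * (M b c)^*) t).
apply: eq_bigr => c _; rewrite adjE mxE.
under eq_bigr do rewrite mxE -mulnb natrM mulrA.
by rewrite -mulr_suml sum_mul_deltar -mulrA mulrCA.
Qed.

Definition selmx m p (f : 'I_p -> 'I_m) : 'M[C]_(m, p) := \matrix_(l, j) (l == f j)%:R.

Lemma adj_selmx_mulmxE m n p q (f : 'I_p -> 'I_m) (g : 'I_q -> 'I_n) (M : 'M[C]_(m, n)) i j :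
  (adj (selmx f) *m M *m selmx g) i j = M (f i) (g j).
Proof.
rewrite !mxE; under eq_bigr do rewrite !mxE.
rewrite sum_mul_deltar; under eq_bigr do rewrite adjE mxE conjC_nat.
by rewrite sum_mul_deltal.
Qed.

Lemma ketI_selmx a b (x : 'I_a) : ketI C b x = selmx (fun j => idx (x, j)).
Proof.
apply/matrixP => i j; case: (mxtens_indexP i) => x' i'.
rewrite castmxE /= mxE.
have -> : cast_ord (esym (mul1n b)) j = idx (ord0, j) by apply: val_inj; rewrite /= mul0n.
by rewrite cast_ord_id !mxtens_indexK /ket !mxE mxtens_index_eq eqxx andbT -natrM mulnb.
Qed.

Definition ket4_index dI dP dF (x y : 'I_dI) (j : 'I_(dP * dF)) :
    'I_((dI * dP) * (dI * dF)) :=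
  idx (idx (x, (mxtens_unindex j).1), idx (y, (mxtens_unindex j).2)).

Lemma ket4_selmx dI dP dF (x y : 'I_dI) : ket4 C dP dF x y = selmx (ket4_index x y).
Proof.
apply/matrixP => l j; case: (mxtens_indexP l) => u v.
case: (mxtens_indexP u) => x' p'; case: (mxtens_indexP v) => y' f'.
case: (mxtens_indexP j) => p f.
rewrite castmxE /= cast_ord_id.
have -> : cast_ord (esym (f_equal2 muln (mul1n dP) (mul1n dF))) (idx (p, f))
   = idx (idx (ord0, p), idx (ord0, f)).
  by apply: val_inj => /=; rewrite !mul0n !add0n !mul1n.
rewrite !tensmxE /ket !mxE /ket4_index mxtens_indexK /= !mxtens_index_eq !eqxx !andbT.
by rewrite -!natrM !mulnb andbACA.
Qed.

Lemma ket4_index_eq dI dP dF (x y z w : 'I_dI) (j c : 'I_(dP * dF)) :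
  (ket4_index x y j == ket4_index z w c) = [&& x == z, y == w & j == c].
Proof.
case: (mxtens_indexP j) => p f; case: (mxtens_indexP c) => p' f'.
by rewrite /ket4_index !mxtens_indexK /= !mxtens_index_eq andbACA -andbA.
Qed.

Lemma ptrace1E a b (M : 'M[C]_(a * b)) i j :
  ptrace1 M i j = \sum_(x < a) M (idx (x, i)) (idx (x, j)).
Proof. by rewrite /ptrace1 summxE; apply: eq_bigr => x _; rewrite ketI_selmx adj_selmx_mulmxE. Qed.

Lemma ptrace_AIAOE dI dP dF (M : 'M[C]_((dI * dP) * (dI * dF))) i j :
  ptrace_AIAO M i j =
  \sum_(x < dI) \sum_(y < dI) M (ket4_index x y i) (ket4_index x y j).
Proof.
rewrite /ptrace_AIAO summxE; apply: eq_bigr => x _.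
by rewrite summxE; apply: eq_bigr => y _; rewrite ket4_selmx adj_selmx_mulmxE.
Qed.

Lemma CJE a b (Phi : 'M[C]_a -> 'M[C]_b) u v u' v' :
  CJ Phi (idx (u, v)) (idx (u', v')) = Phi (delta_mx u u') v v'.
Proof.
rewrite /CJ summxE.
under eq_bigr => x _ do rewrite summxE.
under eq_bigr => x _ do under eq_bigr => y _ do
  rewrite tensmxE mxE -mulnb natrM -mulrA (eq_sym u) (eq_sym u').
by under eq_bigr => x _ do rewrite -mulr_sumr sum_mul_deltal; rewrite sum_mul_deltal.
Qed.

Section Kop.
Variables dI dP dF : nat.
Notation K := (Kop C dI dP dF).

Lemma KopE b c : K b c = \sum_(z < dI) (b == ket4_index z z c)%:R.
Proof. by rewrite /Kop summxE; apply: eq_bigr => z _; rewrite ket4_selmx mxE. Qed.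

Lemma Kop_ket4_index (x y : 'I_dI) j c :
  K (ket4_index x y j) c = ((x == y) && (j == c))%:R.
Proof.
rewrite KopE (bigD1 x) //= big1 ?addr0; last first.
  by move=> z /negbTE nzx; rewrite ket4_index_eq eq_sym nzx.
by rewrite ket4_index_eq eqxx [y == x]eq_sym.
Qed.

Lemma mulmx_KopE m (W : 'M[C]_(m, (dI * dP) * (dI * dF))) a c :
  (W *m K) a c = \sum_(z < dI) W a (ket4_index z z c).
Proof.
rewrite mxE; under eq_bigr do rewrite KopE mulr_sumr.
by rewrite exchange_big; apply: eq_bigr => z _; rewrite sum_mul_deltar.
Qed.

Lemma mulmx_adj_KopE m (M : 'M[C]_(m, dP * dF)) a (x y : 'I_dI) j :
  (M *m adj K) a (ket4_index x y j) = (x == y)%:R * M a j.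
Proof.
rewrite mxE; under eq_bigr do rewrite adjE Kop_ket4_index conjC_nat -mulnb natrM mulrCA.
by rewrite -mulr_sumr; under eq_bigr do rewrite eq_sym; rewrite sum_mul_deltar.
Qed.

Lemma GopE (W : 'M[C]_((dI * dP) * (dI * dF))) i j :
  Gop W i j = \sum_(x < dI) \sum_(z < dI) W (ket4_index x x i) (ket4_index z z j).
Proof.
rewrite /Gop ptrace_AIAOE; apply: eq_bigr => x _.
rewrite (bigD1 x) //= big1 ?addr0; last first.
  by move=> y /negbTE nyx; rewrite mulmx_adj_KopE eq_sym nyx mul0r.
by rewrite mulmx_adj_KopE eqxx mul1r mulmx_KopE.
Qed.

End Kop.

Section LinearMap.
Variables (a b : nat) (Phi : 'M[C]_a -> 'M[C]_b).
Hypothesis linPhi : is_linear_map Phi.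

Lemma linear_map0 : Phi 0 = 0.
Proof.
by have := linPhi 1 0 0; rewrite !scale1r addr0 -{1}[Phi 0]addr0 => /addrI.
Qed.

Lemma linear_mapD X Y : Phi (X + Y) = Phi X + Phi Y.
Proof. by have := linPhi 1 X Y; rewrite !scale1r. Qed.

Lemma linear_mapZ c X : Phi (c *: X) = c *: Phi X.
Proof. by rewrite -[c *: X]addr0 linPhi linear_map0 addr0. Qed.

Lemma linear_map_sum (I : finType) (F : I -> 'M[C]_a) :
  Phi (\sum_i F i) = \sum_i Phi (F i).
Proof. exact: (big_morph Phi linear_mapD linear_map0). Qed.

Lemma CJinvK X : CJinv (CJ Phi) X = Phi X.
Proof.
rewrite [in RHS](matrix_sum_delta X) linear_map_sum.
apply/matrixP => i j; rewrite /CJinv ptrace1E summxE.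
under [RHS]eq_bigr do rewrite linear_map_sum summxE.
rewrite exchange_big /=; apply: eq_bigr => x _.
rewrite [LHS]mxE big_mxtens_index; apply: eq_bigr => y _.
rewrite linear_mapZ [RHS]mxE -[RHS](sum_mul_deltal (fun i0 => X y x * Phi (delta_mx y x) i0 j) i).
apply: eq_bigr => i' _.
by rewrite tensmxE CJE !mxE eq_sym mulrAC mulrC.
Qed.

End LinearMap.

End Entries.

Lemma Gop_CJ_chanU (C : numClosedFieldType) n r k (U : 'M[C]_(2 ^ n * 2 ^ r * 2 ^ k)) :
  Gop (dI := 2 ^ n) (CJ (chanU U)) = CJ (chanUG U).
Proof.
apply/matrixP => i j; case: (mxtens_indexP i) => p f; case: (mxtens_indexP j) => p' f'.
rewrite GopE CJE /chanUG /proj0 tensmx_delta mulmx_delta_adjE /UG !ptrace1E.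
rewrite rmorph_sum mulr_suml; apply: eq_bigr => x _; rewrite mulr_sumr; apply: eq_bigr => z _.
rewrite /ket4_index !mxtens_indexK /= CJE /chanU /proj0 tensmx_delta.
by rewrite !castmxE mulmx_delta_adjE !cast_mxtens_index.
Qed.

Lemma PMO_CJ_chanU (C : numClosedFieldType) n r k (U : 'M[C]_(2 ^ n * 2 ^ r * 2 ^ k)) :
  is_linear_map (chanUG U) -> PMO (dI := 2 ^ n) (CJ (chanU U)) = chanUG U.
Proof.
by move=> linUG; apply: functional_extensionality => X; rewrite /PMO Gop_CJ_chanU CJinvK.
Qed.

Theorem mainTheorem4 (C : numClosedFieldType) (n r k : nat)
    (U : 'M[C]_(2 ^ n * 2 ^ r * 2 ^ k)) :
  (0 < n)%N -> (0 < r)%N -> U \is unitarymx ->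
  Gop (dI := 2 ^ n) (CJ (chanU U)) = CJ (chanUG U)
  /\ (CPTP (chanUG U) ->
      is_process_matrix (dI := 2 ^ n) (CJ (chanU U))
      /\ (forall Phi : 'M[C]_(2 ^ n * 2 ^ r) -> 'M[C]_(2 ^ n * (2 ^ r * 2 ^ k)),
            (forall rho, Phi rho = chanU U rho) ->
            CPTP (PMO (dI := 2 ^ n) (CJ Phi))
            /\ forall sigma, PMO (dI := 2 ^ n) (CJ Phi) sigma = chanUG U sigma)).
Proof.
move=> _ _ _; split; first exact: Gop_CJ_chanU.
move=> cptpUG; have [linUG _ _] := cptpUG.
rewrite /is_process_matrix PMO_CJ_chanU //; split=> // Phi /functional_extensionality ->.
by rewrite PMO_CJ_chanU.
Qed.
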